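(* Let $B$ be a Banach $A$-bimodule, where $A$ has a bounded approximate identity, and suppose $B^*A=B^*$. (1) If every element of $A$ has the $Rw^*w$-property with respect to $A$, then $Z_{B^{**}}(A^{**})=A^{**}$. (2) If every element of $A$ has the $Rw^*w$-property with respect to $B$, then $Z_{A^{**}}(B^{**})=B^{**}$.
   Context: $A$ is a Banach algebra, $B$ a Banach $A$-bimodule with actions $\pi_\ell(a,b)=ab$, $\pi_r(b,a)=ba$. For a bounded bilinear $m:X\times Y\to Z$: $m^*:Z^*\times X\to Y^*$, $\langle m^*(z',x),y\rangle=\langle z',m(x,y)\rangle$; $m^{**}:Y^{**}\times Z^*\to X^*$, $\langle m^{**}(y'',z'),x\rangle=\langle y'',m^*(z',x)\rangle$; $m^{***}:X^{**}\times Y^{**}\to Z^{**}$, $\langle m^{***}(x'',y''),z'\rangle=\langle x'',m^{**}(y'',z')\rangle$. For $b'\in B^*$, $a\in A$: $\langle b'a,b\rangle=\langle b',ab\rangle$; $B^*A=\{b'a:b'\in B^*,a\in A\}$. An element $a\in A$ has the $Rw^*w$-property with respect to $B$ if for every net $(b'_\alpha)\subseteq B^*$, $b'_\alpha a\to0$ weak$^*$ implies $b'_\alpha a\to0$ weakly (in $\sigma(B^*,B^{**})$); ''with respect to $A$'' means $B=A$ as a bimodule over itself (so $\langle a'a,c\rangle=\langle a',ac\rangle$ for $a'\in A^*$). $Z_{B^{**}}(A^{**})=\{a''\in A^{**}:b''\mapsto\pi_\ell^{***}(a'',b'')$ weak$^*$-to-weak$^*$ continuous$\}$; $Z_{A^{**}}(B^{**})=\{b''\in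 B^{**}:a''\mapsto\pi_r^{***}(b'',a'')$ weak$^*$-to-weak$^*$ continuous$\}$. *)

From Stdlib Require Import Reals.
Open Scope R_scope.

Record BanachSpace := mkBanach {
  car :> Type;
  zero : car;
  add : car -> car -> car;
  opp : car -> car;
  scal : R -> car -> car;
  norm : car -> R;
  add_assoc : forall x y z, add x (add y z) = add (add x y) z;
  add_comm : forall x y, add x y = add y x;
  add_zero : forall x, add x zero = x;
  add_opp : forall x, add x (opp x) = zero;
  scal_assoc : forall a b x, scal a (scal b x) = scal (a * b) x;
  scal_one : forall x, scal 1 x = x;
  scal_distr_l : forall a x y, scal a (add x y) = add (scal a x) (scal a y);
  scal_distr_r : forall a b x, scal (a + b) x = add (scal a x) (scal b x);
  norm_eq0 : forall x, norm x = 0 <-> x = zero;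
  norm_triangle : forall x y, norm (add x y) <= norm x + norm y;
  norm_scal : forall a x, norm (scal a x) = Rabs a * norm x;
  complete : forall u : nat -> car,
    (forall eps, 0 < eps -> exists N, forall m n, (N <= m)%nat -> (N <= n)%nat ->
        norm (add (u m) (opp (u n))) < eps) ->
    exists l, forall eps, 0 < eps -> exists N, forall n, (N <= n)%nat ->
        norm (add (u n) (opp l)) < eps
}.
Arguments zero {_}. Arguments add {_}. Arguments opp {_}.
Arguments scal {_}. Arguments norm {_}.

Record BanachAlgebra (A : BanachSpace) := mkBanachAlgebra {
  mul : A -> A -> A;
  mul_assoc : forall x y z, mul x (mul y z) = mul (mul x y) z;
  mul_addl : forall x y z, mul (add x y) z = add (mul x z) (mul y z);
  mul_addr : forall x y z, mul x (add y z) = add (mul x y) (mul x z);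
  mul_scall : forall a x y, mul (scal a x) y = scal a (mul x y);
  mul_scalr : forall a x y, mul x (scal a y) = scal a (mul x y);
  norm_mul : forall x y, norm (mul x y) <= norm x * norm y
}.
Arguments mul {_}.

Record Bimodule (A : BanachSpace) (Alg : BanachAlgebra A) (B : BanachSpace) := mkBimodule {
  lact : A -> B -> B;
  ract : B -> A -> B;
  lact_addl : forall a c b, lact (add a c) b = add (lact a b) (lact c b);
  lact_addr : forall a b d, lact a (add b d) = add (lact a b) (lact a d);
  lact_scall : forall r a b, lact (scal r a) b = scal r (lact a b);
  lact_scalr : forall r a b, lact a (scal r b) = scal r (lact a b);
  ract_addl : forall b d a, ract (add b d) a = add (ract b a) (ract d a);
  ract_addr : forall b a c, ract b (add a c) = add (ract b a) (ract b c);
  ract_scall : forall r b a, ract (scal r b) a = scal r (ract b a);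
  ract_scalr : forall r b a, ract b (scal r a) = scal r (ract b a);
  lact_assoc : forall a c b, lact a (lact c b) = lact (mul Alg a c) b;
  ract_assoc : forall b a c, ract (ract b a) c = ract b (mul Alg a c);
  lr_assoc : forall a b c, ract (lact a b) c = lact a (ract b c);
  norm_lact : forall a b, norm (lact a b) <= norm a * norm b;
  norm_ract : forall b a, norm (ract b a) <= norm b * norm a
}.
Arguments lact {_ _ _}. Arguments ract {_ _ _}.

(** Elements of X' are represented by functions X -> R
    satisfying [dual]; elements of X'' by functions (X -> R) -> R satisfying
    [bidual] (their values on non-functionals are irrelevant). *)
Definition dual (X : BanachSpace) (f : X -> R) : Prop :=
  (forall x y, f (add x y) = f x + f y) /\
  (forall r x, f (scal r x) = r * f x) /\
  (exists M, forall x, Rabs (f x) <= M * norm x).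

Definition opbound (X : BanachSpace) (f : X -> R) (c : R) : Prop :=
  0 <= c /\ forall x, Rabs (f x) <= c * norm x.

Definition bidual (X : BanachSpace) (F : (X -> R) -> R) : Prop :=
  (forall f g, dual X f -> dual X g -> F (fun x => f x + g x) = F f + F g) /\
  (forall r f, dual X f -> F (fun x => r * f x) = r * F f) /\
  (exists M, forall f c, dual X f -> opbound X f c -> Rabs (F f) <= M * c).

Definition directed (I : Type) (le : I -> I -> Prop) : Prop :=
  inhabited I /\ (forall i, le i i) /\
  (forall i j k, le i j -> le j k -> le i k) /\
  (forall i j, exists k, le i k /\ le j k).

Definition net_conv (I : Type) (le : I -> I -> Prop) (u : I -> R) (l : R) : Prop :=
  forall eps, 0 < eps -> exists i0, forall i, le i0 i -> Rabs (u i - l) < eps.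

Definition wstar_wstar_cont (X Y : BanachSpace)
  (F : ((X -> R) -> R) -> ((Y -> R) -> R)) : Prop :=
  forall (I : Type) (le : I -> I -> Prop), directed I le ->
  forall (u : I -> (X -> R) -> R) (v : (X -> R) -> R),
    (forall i, bidual X (u i)) -> bidual X v ->
    (forall f, dual X f -> net_conv I le (fun i => u i f) (v f)) ->
    forall g, dual Y g -> net_conv I le (fun i => F (u i) g) (F v g).

Definition has_bai (A : BanachSpace) (Alg : BanachAlgebra A) : Prop :=
  exists (I : Type) (le : I -> I -> Prop) (e : I -> A) (K : R),
    directed I le /\ (forall i, norm (e i) <= K) /\
    (forall a, net_conv I le (fun i => norm (add (mul Alg (e i) a) (opp a))) 0 /\
               net_conv I le (fun i => norm (add (mul Alg a (e i)) (opp a))) 0).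

(** B' A = B' : every functional b' factors as b'' a. *)
Definition dual_factors (A B : BanachSpace) (lact : A -> B -> B) : Prop :=
  forall f, dual B f -> exists g a, dual B g /\ forall b, f b = g (lact a b).

(** The Rw*w-property of a with respect to the left action [lact] of A on B:
    for nets b'_alpha in B', b'_alpha a -> 0 weak-star implies weakly. *)
Definition Rwsw (A B : BanachSpace) (lact : A -> B -> B) (a : A) : Prop :=
  forall (I : Type) (le : I -> I -> Prop), directed I le ->
  forall (bp : I -> B -> R), (forall i, dual B (bp i)) ->
    (forall b, net_conv I le (fun i => bp i (lact a b)) 0) ->
    (forall G, bidual B G -> net_conv I le (fun i => G (fun b => bp i (lact a b))) 0).

Definition pil3 (A B : BanachSpace) (lact : A -> B -> B)
  (a2 : (A -> R) -> R) (b2 : (B -> R) -> R) : (B -> R) -> R :=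
  fun bp => a2 (fun a => b2 (fun b => bp (lact a b))).
Definition pir3 (A B : BanachSpace) (ract : B -> A -> B)
  (b2 : (B -> R) -> R) (a2 : (A -> R) -> R) : (B -> R) -> R :=
  fun bp => b2 (fun b => a2 (fun a => bp (ract b a))).

Definition Z_Bbb_Abb (A B : BanachSpace) (lact : A -> B -> B) (a2 : (A -> R) -> R) : Prop :=
  bidual A a2 /\ wstar_wstar_cont B B (fun b2 => pil3 A B lact a2 b2).
Definition Z_Abb_Bbb (A B : BanachSpace) (ract : B -> A -> B) (b2 : (B -> R) -> R) : Prop :=
  bidual B b2 /\ wstar_wstar_cont A B (fun a2 => pir3 A B ract b2 a2).

(* For a bounded bilinear m : X x Y -> Z with m(a x, y) = a m(x, y), write g in Z* as g' a0.
   Then m'''(Phi, w)(g) = Phi(k_w a0) with k_w : x |-> w(y |-> g'(m x y)) in X*, and a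
   weak-star convergent net w_i makes k_{w_i} a0 converge weak-star; the Rw*w-property of a0
   upgrades this to weak convergence, which is exactly convergence after applying Phi.  The two
   parts of the theorem are the cases m = pi_l, Phi = a'' and m = pi_r, Phi = b''. *)
From Stdlib Require Import Reals Lra FunctionalExtensionality.
Open Scope R_scope.

Record bounded_linear_by (X Y : BanachSpace) (T : X -> Y) (C : R) : Prop := {
  bl_add : forall x y, T (add x y) = add (T x) (T y);
  bl_scal : forall r x, T (scal r x) = scal r (T x);
  bl_nonneg : 0 <= C;
  bl_norm : forall x, norm (T x) <= C * norm x
}.

Record bounded_bilinear_by (X Y Z : BanachSpace) (m : X -> Y -> Z) (C : R) : Prop := {
  bil_addl : forall x x' y, m (add x x') y = add (m x y) (m x' y);
  bil_scall : forall r x y, m (scal r x) y = scal r (m x y);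
  bil_right : forall x, bounded_linear_by Y Z (m x) (C * norm x)
}.

Definition arens3 (X Y Z : BanachSpace) (m : X -> Y -> Z)
  (Phi : (X -> R) -> R) (w : (Y -> R) -> R) : (Z -> R) -> R :=
  fun g => Phi (fun x => w (fun y => g (m x y))).

Lemma norm_nonneg (X : BanachSpace) (x : X) : 0 <= norm x.
Proof.
  assert (H0 : norm (scal 0 x) = 0) by (rewrite norm_scal, Rabs_R0; ring).
  assert (H1 : norm (scal (-1) x) = norm x).
  { rewrite norm_scal. replace (Rabs (-1)) with 1 by (rewrite Rabs_left; lra). ring. }
  assert (H2 : scal 0 x = add x (scal (-1) x)).
  { replace 0 with (1 + -1) by ring. now rewrite scal_distr_r, scal_one. }
  pose proof (norm_triangle X x (scal (-1) x)) as T.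
  rewrite <- H2, H0, H1 in T. lra.
Qed.

Lemma dual_opbound (X : BanachSpace) (f : X -> R) : dual X f -> exists c, opbound X f c.
Proof.
  intros [_ [_ [M HM]]]. exists (Rabs M). split; [apply Rabs_pos|].
  intro x. eapply Rle_trans; [apply HM|].
  apply Rmult_le_compat_r; [apply norm_nonneg|apply RRle_abs].
Qed.

Lemma dual_add (X : BanachSpace) (f g : X -> R) :
  dual X f -> dual X g -> dual X (fun x => f x + g x).
Proof.
  intros [Fa [Fs [M1 H1]]] [Ga [Gs [M2 H2]]]. split; [|split].
  - intros x y. rewrite Fa, Ga. ring.
  - intros r x. rewrite Fs, Gs. ring.
  - exists (M1 + M2). intro x. eapply Rle_trans; [apply Rabs_triang|].
    specialize (H1 x). specialize (H2 x). lra.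
Qed.

Lemma dual_scale (X : BanachSpace) (r : R) (f : X -> R) :
  dual X f -> dual X (fun x => r * f x).
Proof.
  intros [Fa [Fs [M HM]]]. split; [|split].
  - intros x y. rewrite Fa. ring.
  - intros s x. rewrite Fs. ring.
  - exists (Rabs r * M). intro x. rewrite Rabs_mult, Rmult_assoc.
    apply Rmult_le_compat_l; [apply Rabs_pos|apply HM].
Qed.

Lemma dual_sub (X : BanachSpace) (f g : X -> R) :
  dual X f -> dual X g -> dual X (fun x => f x - g x).
Proof.
  intros Hf Hg.
  replace (fun x => f x - g x) with (fun x => f x + -1 * g x)
    by (apply functional_extensionality; intro; ring).
  now apply dual_add, dual_scale.
Qed.

Lemma bidual_sub (X : BanachSpace) (G : (X -> R) -> R) (f g : X -> R) :
  bidual X G -> dual X f -> dual X g -> G (fun x => f x - g x) = G f - G g.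
Proof.
  intros [Ga [Gs _]] Hf Hg.
  replace (fun x => f x - g x) with (fun x => f x + -1 * g x)
    by (apply functional_extensionality; intro; ring).
  rewrite Ga, Gs by (auto using dual_scale). ring.
Qed.

Lemma opbound_comp (X Y : BanachSpace) (T : X -> Y) (C : R) (f : Y -> R) (c : R) :
  bounded_linear_by X Y T C -> dual Y f -> opbound Y f c ->
  dual X (fun x => f (T x)) /\ opbound X (fun x => f (T x)) (c * C).
Proof.
  intros [Tadd Tscal HC Tnorm] [Fa [Fs _]] [Hc0 Hc].
  assert (Hbd : forall x, Rabs (f (T x)) <= c * C * norm x).
  { intro x. eapply Rle_trans; [apply Hc|]. rewrite Rmult_assoc.
    apply Rmult_le_compat_l; auto. }
  repeat split.
  - intros x y. now rewrite Tadd, Fa.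
  - intros r x. now rewrite Tscal, Fs.
  - now exists (c * C).
  - now apply Rmult_le_pos.
  - exact Hbd.
Qed.

Lemma dual_comp (X Y : BanachSpace) (T : X -> Y) (C : R) (f : Y -> R) :
  bounded_linear_by X Y T C -> dual Y f -> dual X (fun x => f (T x)).
Proof.
  intros HT Hf. destruct (dual_opbound Y f Hf) as [c Hc].
  exact (proj1 (opbound_comp X Y T C f c HT Hf Hc)).
Qed.

Lemma dual_bidual_slice (X Y Z : BanachSpace) (m : X -> Y -> Z) (C : R)
  (g : Z -> R) (w : (Y -> R) -> R) :
  bounded_bilinear_by X Y Z m C -> dual Z g -> bidual Y w ->
  dual X (fun x => w (fun y => g (m x y))).
Proof.
  intros Hm Hg [Wa [Ws [Mw HMw]]].
  destruct (dual_opbound Z g Hg) as [c Hc].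
  pose proof (fun x => opbound_comp Y Z (m x) _ g c (bil_right _ _ _ m C Hm x) Hg Hc)
    as Hslice.
  destruct Hg as [Ga [Gs _]]. split; [|split].
  - intros x x'. rewrite <- Wa by apply Hslice.
    f_equal. apply functional_extensionality; intro y.
    now rewrite (bil_addl _ _ _ m C Hm), Ga.
  - intros r x. rewrite <- Ws by apply Hslice.
    f_equal. apply functional_extensionality; intro y.
    now rewrite (bil_scall _ _ _ m C Hm), Gs.
  - exists (Mw * (c * C)). intro x. destruct (Hslice x) as [Dx Ox].
    eapply Rle_trans; [exact (HMw _ _ Dx Ox)|]. right; ring.
Qed.

Lemma Rwsw_net_conv (A X : BanachSpace) (l : A -> X -> X) (a : A) (C : R) :
  Rwsw A X l a -> bounded_linear_by X X (l a) C ->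
  forall (I : Type) (le : I -> I -> Prop), directed I le ->
  forall (k : I -> X -> R) (k0 : X -> R), (forall i, dual X (k i)) -> dual X k0 ->
  (forall x, net_conv I le (fun i => k i (l a x)) (k0 (l a x))) ->
  forall G, bidual X G ->
  net_conv I le (fun i => G (fun x => k i (l a x))) (G (fun x => k0 (l a x))).
Proof.
  intros HR Hl I le Hd k k0 Hk Hk0 Hconv G HG.
  assert (Hzero : forall x, net_conv I le (fun i => k i (l a x) - k0 (l a x)) 0).
  { intros x eps He. destruct (Hconv x eps He) as [i0 Hi0]. exists i0.
    intros i Hi. rewrite Rminus_0_r. exact (Hi0 i Hi). }
  intros eps He.
  destruct (HR I le Hd (fun i x => k i x - k0 x) (fun i => dual_sub X _ _ (Hk i) Hk0)
              Hzero G HG eps He) as [i0 Hi0].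
  exists i0. intros i Hi. specialize (Hi0 i Hi). cbv beta in Hi0.
  rewrite bidual_sub, Rminus_0_r in Hi0 by eauto using dual_comp.
  exact Hi0.
Qed.

Theorem arens3_wstar_cont (A X Y Z : BanachSpace) (lX : A -> X -> X) (CX : R)
  (lZ : A -> Z -> Z) (m : X -> Y -> Z) (Cm : R) :
  bounded_bilinear_by A X X lX CX -> bounded_bilinear_by X Y Z m Cm ->
  (forall a x y, m (lX a x) y = lZ a (m x y)) ->
  dual_factors A Z lZ -> (forall a, Rwsw A X lX a) ->
  forall Phi, bidual X Phi -> wstar_wstar_cont Y Z (arens3 X Y Z m Phi).
Proof.
  intros HlX Hm Hcompat Hfac HR Phi HPhi I le Hd u v Hu Hv Hconv g Hg.
  destruct (Hfac g Hg) as [g' [a [Hg' Hgeq]]].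
  set (k := fun (w : (Y -> R) -> R) x => w (fun y => g' (m x y))).
  assert (Hunfold : forall w, arens3 X Y Z m Phi w g = Phi (fun x => k w (lX a x))).
  { intro w. unfold arens3, k. f_equal. apply functional_extensionality; intro x.
    f_equal. apply functional_extensionality; intro y. now rewrite Hgeq, Hcompat. }
  rewrite Hunfold.
  replace (fun i => arens3 X Y Z m Phi (u i) g)
    with (fun i => Phi (fun x => k (u i) (lX a x)))
    by (apply functional_extensionality; intro i; now rewrite Hunfold).
  assert (Hk : forall w, bidual Y w -> dual X (k w)).
  { intros w Hw. exact (dual_bidual_slice X Y Z m Cm g' w Hm Hg' Hw). }
  apply (Rwsw_net_conv A X lX a _ (HR a) (bil_right _ _ _ lX CX HlX a) I le Hd
           (fun i => k (u i)) (k v)); auto.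
  intro x. apply Hconv.
  exact (dual_comp Y Z (m (lX a x)) _ g' (bil_right _ _ _ m Cm Hm _) Hg').
Qed.

Lemma bilinear_mul (A : BanachSpace) (Alg : BanachAlgebra A) :
  bounded_bilinear_by A A A (mul Alg) 1.
Proof.
  split; [apply mul_addl|apply mul_scall|].
  intro a. split; [intros; apply mul_addr|intros; apply mul_scalr| |].
  - rewrite Rmult_1_l. apply norm_nonneg.
  - intro x. rewrite Rmult_1_l. apply norm_mul.
Qed.

Lemma bilinear_lact (A : BanachSpace) (Alg : BanachAlgebra A) (B : BanachSpace)
  (M : Bimodule A Alg B) : bounded_bilinear_by A B B (lact M) 1.
Proof.
  split; [apply lact_addl|apply lact_scall|].
  intro a. split; [intros; apply lact_addr|intros; apply lact_scalr| |].
  - rewrite Rmult_1_l. apply norm_nonneg.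
  - intro b. rewrite Rmult_1_l. apply norm_lact.
Qed.

Lemma bilinear_ract (A : BanachSpace) (Alg : BanachAlgebra A) (B : BanachSpace)
  (M : Bimodule A Alg B) : bounded_bilinear_by B A B (ract M) 1.
Proof.
  split; [apply ract_addl|apply ract_scall|].
  intro b. split; [intros; apply ract_addr|intros; apply ract_scalr| |].
  - rewrite Rmult_1_l. apply norm_nonneg.
  - intro a. rewrite Rmult_1_l. apply norm_ract.
Qed.

Theorem mainTheorem7 (A : BanachSpace) (Alg : BanachAlgebra A)
  (B : BanachSpace) (M : Bimodule A Alg B) :
  has_bai A Alg ->
  dual_factors A B (lact M) ->
  ((forall a : A, Rwsw A A (mul Alg) a) ->
     forall a2 : (A -> R) -> R, Z_Bbb_Abb A B (lact M) a2 <-> bidual A a2) /\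
  ((forall a : A, Rwsw A B (lact M) a) ->
     forall b2 : (B -> R) -> R, Z_Abb_Bbb A B (ract M) b2 <-> bidual B b2).
Proof.
  intros _ Hfac. split.
  - intros HR a2. split; [now intros [Ha2 _]|]. intro Ha2. split; [exact Ha2|].
    apply (arens3_wstar_cont A A B B (mul Alg) 1 (lact M) (lact M) 1);
      auto using bilinear_mul, bilinear_lact.
    intros; symmetry; apply lact_assoc.
  - intros HR b2. split; [now intros [Hb2 _]|]. intro Hb2. split; [exact Hb2|].
    apply (arens3_wstar_cont A B A B (lact M) 1 (lact M) (ract M) 1);
      auto using bilinear_lact, bilinear_ract.
    intros; apply lr_assoc.
Qed.
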